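(* Let $\tilde X\in\mathbb{R}^{n\times k}$ have columns of unit Euclidean norm (i.e. $\Gamma_{\ell\ell}=1$ for all $\ell$, where $\Gamma=\tilde X^t\tilde X$). Let $0<\nu<1$ and let $\mathcal{I}\subset\{1,\dots,k\}$ satisfy $\tau(\mathcal{I})\le\nu$. Then for every $x\in\mathbb{R}^{\#(\mathcal{I})}$, $$\|x\|_2^2(1-\nu)\le x^t\,\Gamma_{\mathcal{I}}\,x\le \|x\|_2^2(1+\nu).$$
   Context: $\mathcal{G}_1,\dots,\mathcal{G}_p$ is a partition of $\{1,\dots,k\}$ into groups with $t_j=\#\mathcal{G}_j$; each index $\ell$ is written $\ell=(j,t)$ with $j$ the group containing $\ell$ and $t\in\{1,\dots,t_j\}$ its rank inside $\mathcal{G}_j$. $\Gamma_{\mathcal{I}}=\tilde X_{\mathcal{I}}^t\tilde X_{\mathcal{I}}$ where $\tilde X_{\mathcal{I}}$ is the submatrix of columns indexed by $\mathcal{I}$. $\gamma_{BT}=\sup\{|\Gamma_{(j,t)(j',t')}|: t\neq t'\}$ (over all $j,j'$ and admissible ranks), $\gamma_{BG}=\sup\{|\Gamma_{(j,t)(j',t)}|: j\ne j',\ t\le t_j\wedge t_{j'}\}$, and $\tau(\mathcal{I})=\#(\mathcal{I})\,\gamma_{BT}+\#\{j:\exists t,\ (j,t)\in\mathcal{I}\}\,\gamma_{BG}$. *)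

From mathcomp Require Import all_boot all_order all_algebra.
Set Implicit Arguments. Unset Strict Implicit. Unset Printing Implicit Defensive.
Import Order.TTheory GRing.Theory Num.Theory.
Local Open Scope ring_scope.

(* Group structure: g l = group of index l, rk l = rank of l inside its group
   (0-based: rk l \in {0, .., t_{g l} - 1}). *)
Definition group_size k p (g : 'I_k -> 'I_p) (j : 'I_p) : nat :=
  #|[set l | g l == j]|.

Definition is_group_partition k p (g : 'I_k -> 'I_p) (rk : 'I_k -> nat) : Prop :=
  (forall j : 'I_p, exists l, g l = j) /\
  (forall l, (rk l < group_size g (g l))%N) /\
  (forall l l', g l = g l' -> rk l = rk l' -> l = l').

Definition Gram (R : realFieldType) n k (X : 'M[R]_(n, k)) : 'M[R]_k := X^T *m X.

Definition gamma_BT (R : realFieldType) k (rk : 'I_k -> nat) (G : 'M[R]_k) : R :=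
  \big[Num.max/0]_(l : 'I_k) \big[Num.max/0]_(l' : 'I_k | rk l != rk l') `|G l l'|.

Definition gamma_BG (R : realFieldType) k p (g : 'I_k -> 'I_p) (rk : 'I_k -> nat)
  (G : 'M[R]_k) : R :=
  \big[Num.max/0]_(l : 'I_k) \big[Num.max/0]_(l' : 'I_k | (g l != g l') && (rk l == rk l'))
     `|G l l'|.

Definition tau (R : realFieldType) k p (g : 'I_k -> 'I_p) (rk : 'I_k -> nat)
  (G : 'M[R]_k) (I : {set 'I_k}) : R :=
  #|I|%:R * gamma_BT rk G + #|g @: I|%:R * gamma_BG g rk G.

(* principal submatrix Gamma_I, indices of I in increasing order *)
Definition subGram (R : realFieldType) k (G : 'M[R]_k) (I : {set 'I_k}) : 'M[R]_#|I| :=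
  \matrix_(a < #|I|, b < #|I|) G (enum_val a) (enum_val b).

Definition sqnorm (R : realFieldType) m (x : 'cV[R]_m) : R := \sum_(a < m) x a 0 ^+ 2.

Definition qform (R : realFieldType) m (A : 'M[R]_m) (x : 'cV[R]_m) : R :=
  (x^T *m A *m x) 0 0.

From mathcomp Require Import all_boot all_order all_algebra.
From mathcomp Require Import lra.
Set Implicit Arguments. Unset Strict Implicit. Unset Printing Implicit Defensive.
Import Order.TTheory GRing.Theory Num.Theory.
Local Open Scope ring_scope.

(* A Gershgorin-type estimate: for a symmetric matrix whose off-diagonal row
   sums are at most r, the quadratic form deviates from its diagonal part by at
   most r |x|^2 (AM-GM on each product x_a x_b, then symmetry to collect the
   squares row by row).  For the submatrix of a Gram matrix indexed by I, a
   column l' in the same rank class as l but in another group contributes at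
   most gamma_BG + gamma_BT, any other column at most gamma_BT; as a rank class
   meets each group at most once, the off-diagonal row sums are at most tau(I). *)

Lemma ler_normM_mean_square (R : realDomainType) (u v : R) :
  `|u| * `|v| *+ 2 <= u ^+ 2 + v ^+ 2.
Proof.
by rewrite -(real_normK (num_real u)) -(real_normK (num_real v)) leif_mean_square_scaled.
Qed.

Section QuadraticFormGershgorin.
Variables (R : realFieldType) (m : nat) (A : 'M[R]_m).

Lemma qformE (x : 'cV[R]_m) : qform A x = \sum_a \sum_b A a b * x a 0 * x b 0.
Proof.
rewrite /qform mxE exchange_big; apply: eq_bigr => b _.
rewrite mxE mulr_suml; apply: eq_bigr => a _.
by rewrite !mxE [x a 0 * _]mulrC.
Qed.

Lemma qform_diag_offdiag (x : 'cV[R]_m) :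
  qform A x = \sum_a A a a * x a 0 ^+ 2
              + \sum_a \sum_(b | b != a) A a b * x a 0 * x b 0.
Proof.
rewrite qformE -big_split; apply: eq_bigr => a _.
by rewrite (bigD1 a) //= -mulrA -expr2.
Qed.

Hypothesis A_sym : forall a b, A a b = A b a.

Lemma sum_offdiag_sqr_sym (x : 'cV[R]_m) :
  \sum_a \sum_(b | b != a) `|A a b| * x b 0 ^+ 2
  = \sum_a \sum_(b | b != a) `|A a b| * x a 0 ^+ 2.
Proof.
rewrite (exchange_big_dep predT) //=; apply: eq_bigr => b _.
by apply: eq_big => [a|a _]; rewrite 1?eq_sym // A_sym.
Qed.

Lemma normr_qform_offdiag_le (r : R) (x : 'cV[R]_m) :
  (forall a, \sum_(b | b != a) `|A a b| <= r) ->
  `|qform A x - \sum_a A a a * x a 0 ^+ 2| <= r * sqnorm x.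
Proof.
move=> row_le; rewrite qform_diag_offdiag addrAC subrr add0r.
set off := \sum_a _.
have norm_off : `|off| <= \sum_a \sum_(b | b != a) `|A a b * x a 0 * x b 0|.
  apply: le_trans (ler_norm_sum _ _ _) _.
  by apply: ler_sum => a _; apply: ler_norm_sum.
have amgm : (\sum_a \sum_(b | b != a) `|A a b * x a 0 * x b 0|) * 2
    <= \sum_a \sum_(b | b != a) `|A a b| * (x a 0 ^+ 2 + x b 0 ^+ 2).
  rewrite mulr_suml; apply: ler_sum => a _.
  rewrite mulr_suml; apply: ler_sum => b _.
  by rewrite !normrM -!mulrA ler_wpM2l // mulrA mulr_natr ler_normM_mean_square.
have collect : \sum_a \sum_(b | b != a) `|A a b| * (x a 0 ^+ 2 + x b 0 ^+ 2)
    = (\sum_a (\sum_(b | b != a) `|A a b|) * x a 0 ^+ 2) * 2.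
  under eq_bigr => a _ do under eq_bigr => b _ do rewrite mulrDr.
  under eq_bigr => a _ do rewrite big_split /=.
  rewrite big_split /= sum_offdiag_sqr_sym mulr_natr mulr2n.
  by congr (_ + _); apply: eq_bigr => a _; rewrite mulr_suml.
rewrite -(ler_pM2r (_ : 0 < 2)) //.
apply: le_trans (ler_wpM2r _ norm_off) _ => //.
apply: le_trans amgm _; rewrite collect ler_wpM2r // /sqnorm mulr_sumr.
by apply: ler_sum => a _; rewrite ler_wpM2r ?sqr_ge0.
Qed.

End QuadraticFormGershgorin.

Section GroupedCoherence.
Variables (R : realFieldType) (k p : nat) (g : 'I_k -> 'I_p) (rk : 'I_k -> nat).
Variable G : 'M[R]_k.

Lemma gamma_BT_ge0 : 0 <= gamma_BT rk G.
Proof. exact: bigmax_ge_id. Qed.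

Lemma gamma_BG_ge0 : 0 <= gamma_BG g rk G.
Proof. exact: bigmax_ge_id. Qed.

Lemma normr_le_gamma_BT l l' : rk l != rk l' -> `|G l l'| <= gamma_BT rk G.
Proof.
move=> rk_neq; apply: le_trans (le_bigmax _ _ l).
exact: le_bigmax_cond.
Qed.

Lemma normr_le_gamma_BG l l' :
  g l != g l' -> rk l = rk l' -> `|G l l'| <= gamma_BG g rk G.
Proof.
move=> g_neq /eqP rk_eq; apply: le_trans (le_bigmax _ _ l).
by apply: le_bigmax_cond; rewrite g_neq rk_eq.
Qed.

Hypothesis g_rk_inj : forall l l', g l = g l' -> rk l = rk l' -> l = l'.

Lemma card_rank_class_le (I : {set 'I_k}) (c : nat) :
  (#|[set l in I | rk l == c]| <= #|g @: I|)%N.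
Proof.
rewrite -(@card_in_imset _ _ g); last first.
  move=> l1 l2; rewrite !inE => /andP[_ /eqP rk1] /andP[_ /eqP rk2] g_eq.
  by apply: g_rk_inj => //; rewrite rk1 rk2.
apply/subset_leq_card/imsetS/subsetP => l.
by rewrite inE => /andP[].
Qed.

Lemma normr_offdiag_le_gamma l l' : l' != l ->
  `|G l l'| <= gamma_BT rk G + (if rk l' == rk l then gamma_BG g rk G else 0).
Proof.
move=> neq_l; case: eqP => [rk_eq|/eqP rk_neq].
  have g_neq : g l != g l'.
    by apply: contra neq_l => /eqP g_eq; apply/eqP/g_rk_inj.
  by rewrite addrC ler_wpDr ?gamma_BT_ge0 ?normr_le_gamma_BG.
by rewrite addr0 normr_le_gamma_BT // eq_sym.
Qed.

Lemma offdiag_row_le_tau (I : {set 'I_k}) l :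
  \sum_(l' in I | l' != l) `|G l l'| <= tau g rk G I.
Proof.
apply: le_trans (_ : \sum_(l' in I)
    (gamma_BT rk G + (if rk l' == rk l then gamma_BG g rk G else 0)) <= _).
  rewrite big_mkcondr /=; apply: ler_sum => l' _.
  case: eqP => [_|/eqP neq_l]; last exact: normr_offdiag_le_gamma.
  by rewrite addr_ge0 ?gamma_BT_ge0 //; case: ifP => _; rewrite ?gamma_BG_ge0.
rewrite big_split /= -big_mkcondr !sumr_const /tau !mulr_natl lerD2l.
apply: ler_wpMn2l; first exact: gamma_BG_ge0.
apply: leq_trans (card_rank_class_le I (rk l)).
by rewrite cardsE.
Qed.

Lemma subGram_offdiag_row_le_tau (I : {set 'I_k}) (a : 'I_#|I|) :
  \sum_(b | b != a) `|subGram G I a b| <= tau g rk G I.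
Proof.
apply: le_trans (offdiag_row_le_tau I (enum_val a)).
rewrite big_enum_val_cond le_eqVlt; apply/orP; left; apply/eqP/eq_big => [b|b _].
  by rewrite (inj_eq enum_val_inj).
by rewrite mxE.
Qed.

End GroupedCoherence.

Lemma Gram_sym (R : realFieldType) n k (X : 'M[R]_(n, k)) l l' :
  Gram X l l' = Gram X l' l.
Proof. by rewrite /Gram !mxE; apply: eq_bigr => i _; rewrite !mxE mulrC. Qed.

Theorem lemma1 (R : realFieldType) (n k p : nat) (g : 'I_k -> 'I_p) (rk : 'I_k -> nat)
  (X : 'M[R]_(n, k)) (nu : R) (I : {set 'I_k}) :
  is_group_partition g rk ->
  (forall l : 'I_k, Gram X l l = 1) ->
  0 < nu -> nu < 1 ->
  tau g rk (Gram X) I <= nu ->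
  forall x : 'cV[R]_#|I|,
    sqnorm x * (1 - nu) <= qform (subGram (Gram X) I) x /\
    qform (subGram (Gram X) I) x <= sqnorm x * (1 + nu).
Proof.
move=> [_ [_ g_rk_inj]] Gram_diag _ _ tau_le x.
set A := subGram (Gram X) I.
have A_sym a b : A a b = A b a by rewrite /A mxE [RHS]mxE Gram_sym.
have row_le a : \sum_(b | b != a) `|A a b| <= nu.
  exact: le_trans (subGram_offdiag_row_le_tau (Gram X) g_rk_inj a) tau_le.
have diag_part : \sum_a A a a * x a 0 ^+ 2 = sqnorm x.
  by apply: eq_bigr => a _; rewrite /A mxE Gram_diag mul1r.
have /ler_normlP[] := normr_qform_offdiag_le A_sym x row_le.
rewrite diag_part; split; lra.
Qed.
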